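(* Let $T$ be a skew-nontrivial tree. Then the following are equivalent: (1) $\mathrm{Z}_-(T)=1$; (2) $SD_2(T)$ is a tree; (3) $T$ is the 1-subdivision of a tree; (4) $T$ is the 1-subdivision of $SD_2(T)$.
   Context: Skew forcing: vertices are colored blue or white; if any vertex $u$ (blue or white) has exactly one white neighbor $v$, then $u$ may force $v$ to become blue; a skew forcing set is a set of initially blue vertices from which repeated forcing turns all vertices blue, and $\mathrm{Z}_-(G)$ is the minimum size of one. $B^{\emptyset}_-(T)$ is the set of vertices that become blue when the skew forcing rule is applied starting from the empty set until no more forces are possible, and $W^{\emptyset}_-(T)=V(T)\setminus B^{\emptyset}_-(T)$. The skew-nontrivial subgraph $\check G$ of $G$ is obtained by computing $B^{\emptyset}_-(G)$, then deleting each vertex of $B^{\emptyset}_-(G)$ all of whose neighbors are in $B^{\emptyset}_-(G)$, and deleting each edge with both endpoints in $B^{\emptyset}_-(G)$; $T$ is skew-nontrivial if $\check T=T$. The special distance-2 graph $SD_2(T)$ has vertex set $W^{\emptyset}_-(T)$, with $u,w$ adjacent iff $u\ne w$ and $N_T(u)\cap N_T(w)\neq\emptyset$. The 1-subdivision of a graph $H$ is obtained by inserting one new vertex on every edge of $H$. *)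

From mathcomp Require Import all_boot all_order.
Set Implicit Arguments. Unset Strict Implicit. Unset Printing Implicit Defensive.

Definition simple_graph (V : finType) (e : rel V) : Prop :=
  symmetric e /\ irreflexive e.

Definition is_tree (V : finType) (e : rel V) : Prop :=
  [/\ 0 < #|V|,
      (forall x y : V, connect e x y) &
      (forall c : seq V, uniq c -> 3 <= size c -> ~~ cycle e c)].

Definition graph_iso (A B : finType) (eA : rel A) (eB : rel B) : Prop :=
  exists f : A -> B, bijective f /\ forall x y, eB (f x) (f y) = eA x y.

Section Skew.
Variables (V : finType) (e : rel V).

(* one round of skew forcing: every vertex u (blue or white) with exactly
   one white neighbour v forces v *)
Definition skew_step (B : {set V}) : {set V} :=
  B :|: [set v | [exists u, [set w | e u w & w \notin B] == [set v]]].

(* the final set of blue vertices obtained by repeated forcing from S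
   (after #|V| rounds no further force is possible) *)
Definition skew_closure (S : {set V}) : {set V} := iter #|V| skew_step S.

Definition skew_forcing_set (S : {set V}) : bool := skew_closure S == setT.

Definition Zminus : nat :=
  \big[minn/#|V|]_(S : {set V} | skew_forcing_set S) #|S|.

Definition Bempty : {set V} := skew_closure set0.
Definition Wempty : {set V} := ~: Bempty.

(* G is skew-nontrivial: the skew-nontrivial subgraph equals G, i.e. no
   vertex of Bempty has all its neighbours in Bempty, and no edge has
   both endpoints in Bempty. *)
Definition skew_nontrivial : Prop :=
  (forall v, v \in Bempty -> ~ (forall w, e v w -> w \in Bempty)) /\
  (forall u v, e u v -> ~ (u \in Bempty /\ v \in Bempty)).

Definition SD2_vertex := {x : V | x \in Wempty}.
Definition SD2_rel : rel SD2_vertex :=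
  fun a b => (val a != val b) && [exists x, e (val a) x && e (val b) x].
End Skew.
Arguments SD2_rel {V} e.

Section Subdiv.
Variables (U : finType) (f : rel U).
Definition is_edge (S : {set U}) : bool :=
  [exists x, exists y, f x y && (S == [set x; y])].
Definition edge_type := {S : {set U} | is_edge S}.
Definition subdiv_vertex : finType := (U + edge_type)%type.
Definition subdiv_rel : rel subdiv_vertex :=
  fun a b => match a, b with
  | inl u, inr s => u \in val s
  | inr s, inl u => u \in val s
  | _, _ => false
  end.
End Subdiv.
Arguments subdiv_rel {U} f.

Definition is_subdivision_of (V : finType) (e : rel V) (U : finType) (f : rel U) : Prop :=
  graph_iso e (subdiv_rel f).

(* Let B be the set of vertices forced from the empty set and W the rest.
   Since no vertex has exactly one neighbour outside B, a white vertex with a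
   white neighbour has two of them, so acyclicity makes W independent; with
   skew-nontriviality the tree is bipartite with sides B and W, and every blue
   vertex has at least two neighbours.  Counting edges from the blue side,
   |T| - 1 = sum_{b in B} deg b >= 2|B|, and each of the four conditions turns
   out to be equivalent to every blue vertex having degree exactly 2.
   If {r} forces T, sending each vertex of W other than r to the (blue)
   vertex that forced it is injective, so |W| <= |B| + 1.  A blue vertex of
   degree at least 3 yields a triangle in SD_2(T).  In a 1-subdivision of a
   tree the subdivision vertices form one side of the (unique) bipartition;
   were it W, then 2|W| = |T| - 1 >= 2|B| would contradict |B| + |W| = |T|.
   Conversely, when all blue vertices have degree 2 they are exactly the
   subdivision vertices of the edges of SD_2(T), and any single white vertex
   forces the whole tree along paths of the connected graph SD_2(T). *)

From mathcomp Require Import all_boot all_order zify.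
Set Implicit Arguments. Unset Strict Implicit. Unset Printing Implicit Defensive.
Import Order.TTheory.

(** * Skew forcing *)

Section SkewClosure.
Variables (V : finType) (e : rel V).
Implicit Types (A B S : {set V}).

Local Notation step := (skew_step e).

Definition white_nbrs B u : {set V} := [set w | e u w & w \notin B].

Lemma skew_stepE B : step B = B :|: [set v | [exists u, white_nbrs B u == [set v]]].
Proof. by []. Qed.

Lemma in_white_nbrs B u w : (w \in white_nbrs B u) = e u w && (w \notin B).
Proof. by rewrite inE. Qed.

Lemma subset_skew_step B : B \subset step B.
Proof. exact: subsetUl. Qed.

Lemma white_nbrsS A B u : A \subset B -> white_nbrs B u \subset white_nbrs A u.
Proof.
move=> AB; apply/subsetP=> w; rewrite !in_white_nbrs => /andP[-> wB] /=.
by apply: contra wB; apply: (subsetP AB).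
Qed.

Lemma skew_step_forced B u v : white_nbrs B u == [set v] -> v \in step B.
Proof. by move=> uv; rewrite skew_stepE !inE; apply/orP; right; apply/existsP; exists u. Qed.

Lemma skew_stepS A B : A \subset B -> step A \subset step B.
Proof.
move=> AB; apply/subsetP=> v; rewrite skew_stepE inE => /orP[vA|].
  by rewrite (subsetP (subset_skew_step B)) // (subsetP AB).
rewrite inE => /existsP[u /eqP uv].
have [vB|vNB] := boolP (v \in B); first by rewrite (subsetP (subset_skew_step B)).
apply: (@skew_step_forced _ u); rewrite eqEsubset -{1}uv white_nbrsS //= sub1set.
by move: (set11 v); rewrite -{1}uv !in_white_nbrs vNB => /andP[-> _].
Qed.

Lemma subset_iter_skew_step S i j : i <= j -> iter i step S \subset iter j step S.
Proof.
move=> /subnK <-; elim: (j - i) => [|d IH] //=.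
by rewrite ?addSn; apply: subset_trans IH (subset_skew_step _).
Qed.

Lemma sub_skew_closure S : S \subset skew_closure e S.
Proof. exact: (subset_iter_skew_step S (leq0n _)). Qed.

Lemma skew_closureS S S' : S \subset S' -> skew_closure e S \subset skew_closure e S'.
Proof. by rewrite /skew_closure; elim: #|V| => //= k IH /IH; apply: skew_stepS. Qed.

(* The chain [iter i step S] increases, so it is stationary after [#|V|] steps. *)
Lemma skew_closureK S : step (skew_closure e S) = skew_closure e S.
Proof.
pose it i := iter i step S.
suff /existsP[k /eqP fix_k] : [exists k : 'I_#|V|.+1, it k.+1 == it k].
  by rewrite /skew_closure -(subnK (leq_ord k)) iterD iter_fix.
apply: contraT => /existsPn /= neq_it.
suff it_big k : k <= #|V|.+1 -> k <= #|it k|.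
  by have := it_big _ (leqnn _); rewrite ltnNge max_card.
elim: k => [|k IH] lt_k //=; apply: leq_ltn_trans (IH (ltnW lt_k)) _.
by rewrite proper_card // properEneq subset_skew_step eq_sym (neq_it (Ordinal lt_k)).
Qed.

Lemma skew_closure_white_nbrs S u v : white_nbrs (skew_closure e S) u != [set v].
Proof.
apply/negP => uv; have := skew_step_forced uv; rewrite skew_closureK => vS.
by move: (set11 v); rewrite -(eqP uv) in_white_nbrs vS andbF.
Qed.

Lemma forcing_setT : skew_forcing_set e setT.
Proof. by rewrite /skew_forcing_set eqEsubset subsetT sub_skew_closure. Qed.

Lemma Zminus_le S : skew_forcing_set e S -> Zminus e <= #|S|.
Proof. exact: (bigmin_le_cond _ (fun S : {set V} => #|S|)). Qed.

Lemma Zminus_attained : exists2 S, skew_forcing_set e S & Zminus e = #|S|.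
Proof.
have [S forcingS minS] :=
  eq_bigmin (x := #|V|) _ _ (fun S : {set V} => #|S|) forcing_setT (fun S _ => max_card S).
by exists S.
Qed.

End SkewClosure.

Section ForcingChain.
Variables (V : finType) (e : rel V) (r : V).
Hypothesis r_forcing : skew_closure e [set r] = setT.

Local Notation blue k := (iter k (skew_step e) [set r]).

Definition forces u v := [exists k : 'I_#|V|, white_nbrs e (blue k) u == [set v]].

Lemma forces_edge u v : forces u v -> e u v.
Proof. by case/existsP=> k /eqP uv; move: (set11 v); rewrite -uv in_white_nbrs => /andP[]. Qed.

Lemma forces_later k k' u v : k < k' -> white_nbrs e (blue k) u = [set v] ->
  white_nbrs e (blue k') u = set0.
Proof.
move=> lt_kk' uv; have mono := subset_iter_skew_step e [set r].
have sub_v : white_nbrs e (blue k') u \subset [set v].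
  by rewrite -uv white_nbrsS // mono // ltnW.
have vB : v \in blue k' by rewrite (subsetP (mono _ _ lt_kk')) //= (@skew_step_forced _ _ _ u) ?uv.
apply/eqP; rewrite -subset0; apply/subsetP=> w wW.
by move: wW (subsetP sub_v w wW); rewrite inE => + /eqP wv; rewrite wv in_white_nbrs vB andbF.
Qed.

Lemma forces_functional u v v' : forces u v -> forces u v' -> v = v'.
Proof.
move=> /existsP[k /eqP uv] /existsP[k' /eqP uv'].
have no_later j j' w w' : j < j' -> white_nbrs e (blue j) u = [set w] ->
    white_nbrs e (blue j') u = [set w'] -> False.
  by move=> lt_jj' uw; rewrite (forces_later lt_jj' uw) => /setP/(_ w'); rewrite !inE eqxx.
case: (ltngtP k k') => [lt_kk'|lt_k'k|/ord_inj eq_kk'].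
- by case: (no_later _ _ _ _ lt_kk' uv uv').
- by case: (no_later _ _ _ _ lt_k'k uv' uv).
- by move: uv'; rewrite -eq_kk' uv => /set1_inj.
Qed.

Lemma forced_by_some v : v != r -> exists u, forces u v.
Proof.
move=> vNr; have : v \in skew_closure e [set r] by rewrite r_forcing inE.
rewrite /skew_closure; elim: {-2}#|V| (leqnn #|V|) => [|k IH] le_k /=.
  by rewrite inE (negbTE vNr).
rewrite skew_stepE inE => /orP[/(IH (ltnW le_k)) //|]; rewrite inE => /existsP[u uv].
by exists u; apply/existsP; exists (Ordinal le_k).
Qed.

Lemma card_forced_le (A N : {set V}) :
  (forall u v, v \in A -> e u v -> u \in N) -> #|A :\ r| <= #|N|.
Proof.
move=> nbrs_in_N; pose forcer v := odflt v [pick u | forces u v].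
have forcerP v : v != r -> forces (forcer v) v.
  by case/forced_by_some=> u uv; rewrite /forcer; case: pickP => [//|/(_ u)]; rewrite uv.
rewrite -(@card_in_imset _ _ forcer).
  apply/subset_leq_card/subsetP=> _ /imsetP[v /setD1P[vNr vA] ->].
  exact: nbrs_in_N vA (forces_edge (forcerP v vNr)).
move=> v v' /setD1P[vNr _] /setD1P[v'Nr _] eq_forcer.
by apply: (forces_functional (forcerP v vNr)); rewrite eq_forcer; apply: forcerP.
Qed.

End ForcingChain.

(** * Paths and cycles *)

Definition has_cycle (T : eqType) (r : rel T) : Prop :=
  exists c, [/\ uniq c, 3 <= size c & cycle r c].

Definition avoid (T : eqType) (r : rel T) p q : rel T :=
  fun a b => r a b && ~~ ((a \in [:: p; q]) && (b \in [:: p; q])).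

Lemma has_cycle_avoid (T : finType) (r : rel T) p q : p != q -> r p q ->
  connect (avoid r p q) q p -> has_cycle r.
Proof.
move=> pNq rpq /connectP[s qs p_last]; case: (shortenP qs) p_last => s' qs' uniq_s' _ p_last.
exists (q :: s'); split => //.
- case: s' qs' uniq_s' p_last => [|z [|z' s'']] //= qs' _ p_last.
    by rewrite p_last eqxx in pNq.
  by move: qs'; rewrite /avoid -p_last !inE !eqxx orbT andbF.
- rewrite /= rcons_path -p_last rpq andbT.
  by apply: sub_path qs' => a b /andP[].
Qed.

Lemma path_avoid (T : eqType) (r : rel T) (Q : pred T) x s y :
  Q x -> all Q s -> path r x (rcons s y) ->
  path (fun a b => r a b && (Q a || Q b)) x (rcons s y).
Proof.
elim: s x => [|z s IH] x Qx /=; first by rewrite Qx !andbT.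
by case/andP=> Qz Qs /andP[rxz zs]; rewrite rxz Qx /= IH.
Qed.

Lemma path_connect_map (A C : finType) (r : rel A) (s : rel C) (f : A -> C) x p :
  (forall a b, r a b -> connect s (f a) (f b)) -> path r x p -> connect s (f x) (f (last x p)).
Proof.
move=> r_s; elim: p x => [|y p IH] x /=; first by move=> _; apply: connect0.
by case/andP=> /r_s xy /IH; apply: connect_trans.
Qed.

Lemma crossing (V : finType) (r : rel V) (C : pred V) x y :
  connect r x y -> C x -> ~~ C y -> exists u v, [/\ r u v, C u & ~~ C v].
Proof.
move=> /connectP[p xp ->]; elim: p x xp => [|z p IH] x /=; first by move=> _ ->.
case/andP=> rxz zp Cx Cp; have [Cz|CNz] := boolP (C z); first exact: IH zp Cz Cp.
by exists x, z.
Qed.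

Lemma exists_other (T : finType) (A : {set T}) y : A != [set y] -> y \in A -> exists2 z, z \in A & z != y.
Proof.
move=> A_neq1 yA; have [/existsP[z /andP[]]|/existsPn none] := boolP [exists z, (z \in A) && (z != y)].
  by exists z.
case/eqP: A_neq1; apply/setP=> z; rewrite inE; apply/idP/eqP=> [zA|-> //].
by apply/eqP; move: (none z); rewrite zA negbK.
Qed.

Section SimpleGraph.
Variables (T : finType) (e : rel T).
Hypotheses (e_sym : symmetric e) (e_irr : irreflexive e).

Lemma edge_neq x y : e x y -> x != y.
Proof. by apply: contraTneq => ->; rewrite e_irr. Qed.

Definition nbhd x : {set T} := [set y | e x y].

Lemma in_nbhd x y : (y \in nbhd x) = e x y.
Proof. by rewrite inE. Qed.

(* Every path inside [X] extends at its head, so a cycle closes up before the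
   path outgrows [#|T|]. *)
Lemma has_cycle_no_leaf (X : {set T}) x0 y0 :
  (forall x y, x \in X -> y \in X -> e x y -> exists z, [/\ e x z, z \in X & z != y]) ->
  x0 \in X -> y0 \in X -> e x0 y0 -> has_cycle e.
Proof.
move=> extend x0X y0X e0.
suff [//|[y [z [s [uniq_s _ _ size_s]]]]] : has_cycle e \/ exists y z s,
    [/\ uniq [:: y, z & s], path e y (z :: s), all [in X] [:: y, z & s] & size s = #|T|].
  by move/card_uniqP: uniq_s (max_card (mem [:: y, z & s])) => -> /=; rewrite size_s ltnNge leqnSn.
elim: #|T| => [|n [cyc|[y [z [s [uniq_s yzs X_yzs size_s]]]]]]; [right | by left |].
  exists y0, x0, [::]; split => //=; last by rewrite x0X y0X.
    by rewrite inE eq_sym edge_neq.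
  by rewrite e_sym e0.
move: (X_yzs) (yzs) => /= /and3P[yX zX _] /andP[eyz _].
have [y' [eyy' y'X y'Nz]] := extend y z yX zX eyz.
have [y'_in|y'_out] := boolP (y' \in [:: y, z & s]); last first.
  right; exists y', y, (z :: s); split.
  - by rewrite cons_uniq y'_out.
  - by apply/andP; rewrite e_sym.
  - by apply/andP.
  - by rewrite /= size_s.
left; have y's : y' \in s by move: y'_in; rewrite !inE (negbTE y'Nz) eq_sym (negbTE (edge_neq eyy')).
clear X_yzs size_s y'_in; case/splitPr: s / y's uniq_s yzs => s1 s2 uniq_s yzs.
move: uniq_s yzs; rewrite -cat_rcons => uniq_s yzs.
exists [:: y, z & rcons s1 y']; split.
- by move: uniq_s; rewrite -[[:: y, z & _]]/([:: y, z & rcons s1 y'] ++ s2) cat_uniq => /andP[].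
- by rewrite /= size_rcons.
- move: yzs; rewrite -[z :: _]/((z :: rcons s1 y') ++ s2) cat_path => /andP[zs1 _].
  by rewrite /cycle rcons_path zs1 /= last_rcons e_sym.
Qed.
End SimpleGraph.

(** * Forests *)

Section Forest.
Variables (T : finType) (e : rel T).
Hypotheses (e_sym : symmetric e) (e_irr : irreflexive e) (acyclic : ~ has_cycle e).
Implicit Types (X : {set T}).

Local Notation nbhd := (nbhd e).

Definition induced X : rel T := fun x y => [&& x \in X, y \in X & e x y].

Definition connected_in X := {in X &, forall x y, connect (induced X) x y}.

Lemma common_nbrs_eq x y p q : p != q -> e x p -> e x q -> e y p -> e y q -> x = y.
Proof.
move=> pNq exp exq eyp eyq; apply/eqP/negPn/negP => xNy; apply: acyclic.
exists [:: p; x; q; y]; split => //=; last by rewrite e_sym exp exq e_sym eyq eyp.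
rewrite !inE !negb_or pNq xNy eq_sym (edge_neq e_irr exp) (edge_neq e_irr exq).
by rewrite eq_sym (edge_neq e_irr eyp) eq_sym (edge_neq e_irr eyq).
Qed.

Lemma exists_leaf X : 1 < #|X| -> connected_in X ->
  exists l m, l \in X /\ nbhd l :&: X = [set m].
Proof.
move=> X_gt1 X_conn.
have [/existsP[l /andP[lX /existsP[m /eqP lm]]]|/existsPn no_leaf] :=
  boolP [exists l, (l \in X) && [exists m, nbhd l :&: X == [set m]]].
  by exists l, m.
case: acyclic; have [x [y [xX yX xNy]]] := card_gt1P X_gt1.
case/connectP: (X_conn x y xX yX) => [[|z p]] /=; first by move=> _ eq_xy; rewrite eq_xy eqxx in xNy.
case/andP=> /and3P[_ zX exz] _ _; apply: (has_cycle_no_leaf e_sym e_irr _ xX zX exz).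
move=> a b aX bX eab; have := no_leaf a; rewrite aX => /existsPn /(_ b) ab_leaf.
have b_in : b \in nbhd a :&: X by rewrite !inE eab bX.
have [c] := exists_other ab_leaf b_in.
by rewrite !inE => /andP[eac cX] cNb; exists c.
Qed.

Lemma path_induced_setD1 X l x p : x != l -> l \notin p -> path (induced X) x p ->
  path (induced (X :\ l)) x p.
Proof.
elim: p x => [|y p IH] x //= xNl; rewrite inE negb_or => /andP[yNl lNp].
case/andP=> /and3P[xX yX exy] Xp; rewrite /induced !inE xNl xX eq_sym yNl yX exy /=.
by apply: IH; rewrite // eq_sym.
Qed.

(* A shortest path between two vertices other than the leaf [l] cannot pass
   through [l], since it would enter and leave [l] through [m]. *)
Lemma connected_in_setD1_leaf X l m : l \in X -> nbhd l :&: X = [set m] ->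
  connected_in X -> connected_in (X :\ l).
Proof.
move=> lX l_leaf X_conn x y /setD1P[xNl xX] /setD1P[yNl yX].
case/connectP: (X_conn x y xX yX) => p xp y_last.
case: (shortenP xp) y_last => p' xp' uniq_p' _ y_last.
apply/connectP; exists p' => //; apply: path_induced_setD1 => //.
apply/negP=> lp'; move: xp' uniq_p' y_last; case/splitPr: p' / lp' => p1 [|z p2] xp' uniq_p'.
  by rewrite last_cat /= => eq_yl; rewrite eq_yl eqxx in yNl.
move=> _; move: xp'; rewrite cat_path /= => /and4P[_ /and3P[lastX _ e_last] /and3P[_ zX elz] _].
have to_m w : w \in X -> e l w -> w = m by move=> wX elw; apply/set1P; rewrite -l_leaf !inE elw.
have last_z : last x p1 = z by rewrite (to_m z) // (to_m _ lastX) // e_sym.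
move: uniq_p'; rewrite -cat_cons cat_uniq => /and3P[_ /hasPn/(_ z)].
by rewrite -last_z mem_last !inE eqxx orbT => /(_ isT).
Qed.

Section Bipartition.
Variable P : {set T}.
Hypothesis P_bip : forall x y, e x y -> (x \in P) != (y \in P).

Lemma sum_deg_setD1_leaf X l m : l \in X -> nbhd l :&: X = [set m] ->
  \sum_(b in P :&: X) #|nbhd b :&: X| = (\sum_(b in P :&: (X :\ l)) #|nbhd b :&: (X :\ l)|).+1.
Proof.
move=> lX l_leaf; set X' := X :\ l.
have /setIP[elm mX] : m \in nbhd l :&: X by rewrite l_leaf set11.
rewrite in_nbhd in elm.
have el_m w : w \in X -> e w l = (w == m).
  by move=> wX; rewrite e_sym; apply/idP/eqP => [lw|->//]; apply/set1P; rewrite -l_leaf !inE lw.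
have deg_X b : #|nbhd b :&: X| = e b l + #|nbhd b :&: X'|.
  rewrite (cardsD1 l) !inE lX andbT; congr (_ + _); apply: eq_card => z.
  by rewrite !inE andbCA.
rewrite (eq_bigr _ (fun b _ => deg_X b)) big_split /=.
have [lP|lNP] := boolP (l \in P).
  have mNP : m \notin P by move: (P_bip elm); rewrite lP; case: (m \in P).
  rewrite big1 => [|b /setIP[bP bX]]; last by rewrite el_m //; case: eqP bP => // ->; rewrite (negbTE mNP).
  rewrite (bigD1 l) /=; last by rewrite inE lP lX.
  have -> : #|nbhd l :&: X'| = 1.
    by rewrite -(cards1 m) -l_leaf; apply: eq_card => z; rewrite !inE; case: eqP => // ->; rewrite e_irr.
  by rewrite add0n add1n; congr _.+1; apply: eq_bigl => b; rewrite !inE andbAC -andbA.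
have mP : m \in P by move: (P_bip elm); rewrite (negbTE lNP); case: (m \in P).
rewrite (bigD1 m) /=; last by rewrite inE mP mX.
rewrite big1 => [|b /andP[/setIP[_ bX] bNm]]; last by rewrite el_m // (negbTE bNm).
rewrite el_m // eqxx addn0 add1n; congr _.+1; apply: eq_bigl => b; rewrite !inE.
by case: eqP => // ->; rewrite (negbTE lNP).
Qed.

Lemma sum_deg_connected X : 0 < #|X| -> connected_in X ->
  \sum_(b in P :&: X) #|nbhd b :&: X| + 1 = #|X|.
Proof.
move=> /prednK; move: #|X|.-1 => n; elim: n X => [|n IH] X size_X X_conn.
  have /cards1P[x ->] : #|X| == 1 by rewrite -size_X.
  rewrite big1 ?cards1 // => b; rewrite inE => /andP[_ /set1P ->].
  apply/eqP; rewrite cards_eq0 -subset0; apply/subsetP => z; rewrite !inE.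
  by case/andP=> exz /eqP zx; rewrite zx e_irr in exz.
have [|l [m [lX l_leaf]]] := exists_leaf _ X_conn; first by rewrite -size_X.
have size_X' : n.+1 = #|X :\ l| by move: size_X; rewrite (cardsD1 l) lX => -[].
rewrite (sum_deg_setD1_leaf lX l_leaf) addSn IH -?size_X' //.
exact: connected_in_setD1_leaf lX l_leaf X_conn.
Qed.

Lemma sum_deg_tree : 0 < #|T| -> (forall x y, connect e x y) ->
  \sum_(b in P) #|nbhd b| + 1 = #|T|.
Proof.
move=> T_gt0 conn; rewrite -cardsT -sum_deg_connected ?cardsT //.
  by congr (_ + 1); apply: eq_big => [b|b _]; rewrite setIT.
move=> x y _ _; apply: connect_sub (conn x y) => a b eab.
by apply: connect1; rewrite /induced !inE.
Qed.

End Bipartition.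
End Forest.

Lemma bipartition_parity (T : finType) (e : rel T) (p q : pred T) :
  (forall x y, e x y -> p x != p y) -> (forall x y, e x y -> q x != q y) ->
  forall x y, connect e x y -> (p x == q x) = (p y == q y).
Proof.
move=> p_bip q_bip x _ /connectP[s xs ->]; elim: s x xs => [|z s IH] x //= /andP[exz zs].
rewrite -(IH z zs); move: (p_bip _ _ exz) (q_bip _ _ exz).
by case: (p x); case: (p z); case: (q x); case: (q z).
Qed.

Section SubdivisionIso.
Variables (T U : finType) (e : rel T) (g : rel U) (f : T -> subdiv_vertex g).
Hypothesis f_edge : forall x y, subdiv_rel g (f x) (f y) = e x y.

Lemma subdiv_iso_bipartite x y : e x y -> is_inl (f x) != is_inl (f y).
Proof. by rewrite -f_edge; case: (f x) => [a|s]; case: (f y) => [b|t]. Qed.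

Lemma subdiv_iso_deg2 f' z s : irreflexive g -> cancel f f' -> cancel f' f ->
  f z = inr s -> #|nbhd e z| = 2.
Proof.
move=> g_irr fK f'K fz; have /existsP[x /existsP[y /andP[gxy /eqP eq_s]]] := valP s.
have -> : nbhd e z = [set f' (inl x); f' (inl y)].
  apply/setP => w; rewrite in_nbhd -f_edge fz !inE -!(can_eq fK) !f'K.
  by case: (f w) => [u|t] //=; rewrite eq_s !inE.
by rewrite cards2 (can_eq f'K); case: eqP gxy => // [[->]]; rewrite g_irr.
Qed.
End SubdivisionIso.

(** * Skew-nontrivial trees *)

Lemma SD2_irr (T : finType) (e : rel T) : irreflexive (SD2_rel e).
Proof. by move=> a; rewrite /SD2_rel eqxx. Qed.

Lemma SD2_sym (T : finType) (e : rel T) : symmetric (SD2_rel e).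
Proof.
move=> a b; rewrite /SD2_rel eq_sym; congr andb.
by apply/existsP/existsP => -[x /andP[eax ebx]]; exists x; rewrite eax ebx.
Qed.

Section SkewNontrivialTree.
Variables (T : finType) (e : rel T).
Hypotheses (e_sym : symmetric e) (e_irr : irreflexive e) (acyclic : ~ has_cycle e)
  (conn : forall x y, connect e x y) (T_gt0 : 0 < #|T|).
Hypotheses (B_white_nbr : forall v, v \in Bempty e -> ~ (forall w, e v w -> w \in Bempty e))
  (B_indep : forall u v, e u v -> ~ (u \in Bempty e /\ v \in Bempty e)).

Local Notation B := (Bempty e).
Local Notation W := (Wempty e).
Local Notation nbhd := (nbhd e).

Lemma inW x : (x \in W) = (x \notin B).
Proof. by rewrite inE. Qed.

Lemma exists_white_nbr b : b \in B -> exists2 w, e b w & w \in W.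
Proof.
move=> bB; have [/existsP[w /andP[ebw wW]]|/existsPn none] := boolP [exists w, e b w && (w \in W)].
  by exists w.
by case: (B_white_nbr bB) => w ebw; move: (none w); rewrite ebw inW negbK.
Qed.

(* A white vertex with a white neighbour has at least two, as [B] is closed. *)
Lemma W_indep x y : x \in W -> y \in W -> ~~ e x y.
Proof.
move=> xW yW; apply/negP => exy; apply: acyclic.
apply: (has_cycle_no_leaf e_sym e_irr _ xW yW exy) => a b aW bW eab.
have b_white : b \in white_nbrs e B a by rewrite in_white_nbrs eab -inW.
have [c] := exists_other (skew_closure_white_nbrs e set0 a b) b_white.
by rewrite in_white_nbrs -inW => /andP[eac cW] cNb; exists c.
Qed.

Lemma bipartite_B x y : e x y -> (x \in B) != (y \in B).
Proof.
move=> exy; case xB: (x \in B); case yB: (y \in B) => //; first by case: (B_indep exy).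
by have := @W_indep x y; rewrite !inW xB yB exy => /(_ isT isT).
Qed.

Lemma B_nbr_W b w : b \in B -> e b w -> w \in W.
Proof. by move=> bB /bipartite_B; rewrite bB inW; case: (w \in B). Qed.

Lemma W_nbr_B w b : w \in W -> e w b -> b \in B.
Proof. by rewrite inW => /negbTE wNB /bipartite_B; rewrite wNB; case: (b \in B). Qed.

Lemma B_deg_gt1 b : b \in B -> 1 < #|nbhd b|.
Proof.
move=> bB; have [w ebw wW] := exists_white_nbr bB.
have w_white : w \in white_nbrs e B b by rewrite in_white_nbrs ebw -inW.
have [z] := exists_other (skew_closure_white_nbrs e set0 b w) w_white.
by rewrite in_white_nbrs => /andP[ebz _] zNw; apply/card_gt1P; exists z, w; rewrite !in_nbhd.
Qed.

Lemma W_nonempty : exists w, w \in W.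
Proof.
have [v _] : exists v, v \in [set: T] by apply/card_gt0P; rewrite cardsT.
have [vB|vNB] := boolP (v \in B); last by exists v; rewrite inW.
by have [w _ wW] := exists_white_nbr vB; exists w.
Qed.

Lemma sum_deg_B : \sum_(b in B) #|nbhd b| + 1 = #|T|.
Proof. exact (sum_deg_tree e_sym e_irr acyclic bipartite_B T_gt0 conn). Qed.

Lemma sum_deg_W : \sum_(w in W) #|nbhd w| + 1 = #|T|.
Proof.
have bipartite_W x y : e x y -> (x \in W) != (y \in W).
  by move/bipartite_B; rewrite !inW; case: (x \in B); case: (y \in B).
exact (sum_deg_tree e_sym e_irr acyclic bipartite_W T_gt0 conn).
Qed.

Lemma card_BW : #|B| + #|W| = #|T|.
Proof. exact: cardsC. Qed.

Definition B_deg2 := forall b, b \in B -> #|nbhd b| = 2.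

(* By [sum_deg_B], [#|T| - 1] is the sum of the degrees in [B], each at least 2. *)
Lemma B_deg2_card : 2 * #|B| + 1 >= #|T| -> B_deg2.
Proof.
move=> card_T b0 b0B; apply/eqP; rewrite eqn_leq B_deg_gt1 // andbT leqNgt.
apply/negP => deg_b0; move: card_T; apply/negP.
rewrite -sum_deg_B mulnC -sum_nat_const leq_add2r -ltnNge.
rewrite (bigD1 b0 b0B) (bigD1 b0 b0B) /=.
by rewrite -addSn leq_add // leq_sum // => b /andP[/B_deg_gt1].
Qed.

Lemma Zminus1_B_deg2 : Zminus e = 1 -> B_deg2.
Proof.
have [S forcingS ->] := Zminus_attained e; move/eqP/cards1P=> [r eq_S].
move: forcingS; rewrite /skew_forcing_set eq_S => /eqP r_forcing.
have : #|W :\ r| <= #|B|.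
  apply: (card_forced_le (A := W) (N := B) r_forcing) => u v vW evu.
  by apply: W_nbr_B vW _; rewrite e_sym.
move: (cardsD1 r W) card_BW => card_W card_T le_W.
by apply: B_deg2_card; have := leq_b1 (r \in W); lia.
Qed.

Definition SD2_of x (xW : x \in W) : SD2_vertex e := exist _ x xW.

Lemma SD2_ofE (a : SD2_vertex e) (aW : val a \in W) : SD2_of aW = a.
Proof. exact: val_inj. Qed.

Lemma SD2_tree_B_deg2 : is_tree (SD2_rel e) -> B_deg2.
Proof.
move=> [_ _ SD2_acyclic] b bB; apply/eqP; rewrite eqn_leq B_deg_gt1 // andbT leqNgt.
apply/negP => /card_gt2P[x [y [z [[]]]]]; rewrite !in_nbhd => ebx eby ebz [xNy yNz zNx].
have [xW yW zW] := And3 (B_nbr_W bB ebx) (B_nbr_W bB eby) (B_nbr_W bB ebz).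
apply: (negP (SD2_acyclic [:: SD2_of xW; SD2_of yW; SD2_of zW] _ _)) => //.
  by rewrite /= !inE -!val_eqE /= negb_or xNy yNz eq_sym zNx.
rewrite /= /SD2_rel /= xNy yNz zNx /=.
by rewrite andbT; apply/and3P; split; apply/existsP; exists b; rewrite ![e _ b]e_sym ?ebx ?eby ?ebz.
Qed.

Lemma SD2_connected (a c : SD2_vertex e) : connect (SD2_rel e) a c.
Proof.
suff walk n p (a' : SD2_vertex e) :
    size p <= n -> path e (val a') p -> last (val a') p = val c -> connect (SD2_rel e) a' c.
  by case/connectP: (conn (val a) (val c)) => p ap /esym; apply: walk (leqnn _) ap.
elim: n p a' => [|n IH] [|x [|z p]] a' //= size_p.
- by move=> _ /val_inj ->.
- by move=> _ /val_inj ->.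
- by case/andP=> eax _ eq_x; rewrite eq_x in eax; move: (W_indep (valP a') (valP c)); rewrite eax.
case/and3P=> eax exz zp c_last; have zW : z \in W := B_nbr_W (W_nbr_B (valP a') eax) exz.
apply: connect_trans (IH p (SD2_of zW) _ zp c_last); last by move: size_p; lia.
have [eq_az|neq_az] := eqVneq (val a') z; first by apply: eq_connect0; apply: val_inj.
by apply: connect1; rewrite /SD2_rel /= neq_az; apply/existsP; exists x; rewrite eax e_sym.
Qed.

Section BDeg2.
Hypothesis B2 : B_deg2.

Lemma nbhd_B_deg2 x a c : x \in B -> e x a -> e x c -> a != c -> nbhd x = [set a; c].
Proof.
move=> xB exa exc aNc; apply/eqP; rewrite eq_sym eqEcard cards2 aNc B2 // andbT.
by apply/subsetP => z; rewrite !inE => /orP[] /eqP ->.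
Qed.

Lemma SD2_edge_B_deg2 (a c : SD2_vertex e) :
  SD2_rel e a c -> exists2 x, x \in B & nbhd x = [set val a; val c].
Proof.
case/andP=> aNc /existsP[x /andP[eax ecx]]; have xB := W_nbr_B (valP a) eax.
by exists x => //; apply: nbhd_B_deg2; rewrite // e_sym.
Qed.

Lemma connect_avoid_SD2_edge x (u v a b : SD2_vertex e) : x \in B ->
  nbhd x = [set val u; val v] -> SD2_rel e a b -> (a \notin [:: u; v]) || (b \notin [:: u; v]) ->
  connect (avoid e (val u) x) (val a) (val b).
Proof.
move=> xB nbhd_x ab ab_uv; have [y yB nbhd_y] := SD2_edge_B_deg2 ab.
have yNx : y != x.
  apply/eqP => eq_yx; have [a_uv b_uv] : val a \in nbhd x /\ val b \in nbhd x.
    by rewrite -eq_yx nbhd_y !inE !eqxx orbT.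
  by move: ab_uv a_uv b_uv; rewrite nbhd_x !inE -!val_eqE => /orP[] /negP.
have yNu : (y \in [:: val u; x]) = false.
  by rewrite !inE (negbTE yNx) orbF; apply: contraTF (valP u) => /eqP <-; rewrite inW negbK.
have [eya eyb] : e y (val a) /\ e y (val b) by rewrite -!in_nbhd nbhd_y !inE !eqxx orbT.
apply: (@connect_trans _ _ y); apply: connect1; rewrite /avoid yNu ?andbF /= ?andbT //.
by rewrite e_sym.
Qed.

Lemma B_deg2_SD2_acyclic c : uniq c -> 3 <= size c -> ~~ cycle (SD2_rel e) c.
Proof.
case: c => [|u [|v [|s0 s]]] //= uniq_c _; apply/negP => /and3P[uv vs0 s0s].
pose Q a := a \notin [:: u; v].
move: uniq_c; rewrite !inE !negb_or => /and4P[/and3P[uNv uNs0 uNs] /andP[vNs0 vNs] _ _].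
have Qs0 : Q s0 by rewrite /Q !inE negb_or eq_sym uNs0 eq_sym vNs0.
have Qs : all Q s.
  apply/allP => z zs; rewrite /Q !inE negb_or.
  by apply/andP; split; [apply: contraNneq uNs | apply: contraNneq vNs] => <-.
have [x xB nbhd_x] := SD2_edge_B_deg2 uv.
have lift a b : SD2_rel e a b && (Q a || Q b) -> connect (avoid e (val u) x) (val a) (val b).
  by case/andP; apply: connect_avoid_SD2_edge.
have := path_connect_map lift (path_avoid Qs0 Qs s0s); rewrite last_rcons => s0_u.
have v_s0 : connect (avoid e (val u) x) (val v) (val s0) by apply: lift; rewrite vs0 Qs0 orbT.
have W_neq_x (w : SD2_vertex e) : val w != x.
  by apply: contraTneq xB => <-; rewrite -inW (valP w).
have [exu exv] : e x (val u) /\ e x (val v) by rewrite -!in_nbhd nbhd_x !inE !eqxx orbT.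
have x_v : avoid e (val u) x x (val v).
  by rewrite /avoid exv !inE eqxx orbT val_eqE eq_sym (negbTE uNv) (negbTE (W_neq_x v)).
apply: acyclic; apply: (has_cycle_avoid (W_neq_x u)); first by rewrite e_sym.
exact: connect_trans (connect1 x_v) (connect_trans v_s0 s0_u).
Qed.

Lemma B_deg2_SD2_tree : is_tree (SD2_rel e).
Proof.
split; [|exact: SD2_connected|exact: B_deg2_SD2_acyclic].
by have [w wW] := W_nonempty; apply/card_gt0P; exists (SD2_of wW).
Qed.

Definition SD2_nbhd v : {set SD2_vertex e} := [set a | e v (val a)].

Lemma is_edge_SD2_nbhd b : b \in B -> is_edge (SD2_rel e) (SD2_nbhd b).
Proof.
move=> bB; have /cards2P[p [q [pNq nbhd_b]]] : #|nbhd b| == 2 by rewrite B2.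
have [ebp ebq] : e b p /\ e b q by rewrite -!in_nbhd nbhd_b !inE !eqxx orbT.
have [pW qW] := (B_nbr_W bB ebp, B_nbr_W bB ebq).
apply/existsP; exists (SD2_of pW); apply/existsP; exists (SD2_of qW).
rewrite /SD2_rel /= pNq; apply/andP; split.
  by apply/existsP; exists b; rewrite ![e _ b]e_sym ebp ebq.
by apply/eqP/setP => a; rewrite !inE -!val_eqE /= -!in_set2 -nbhd_b in_nbhd.
Qed.

(* A blue vertex goes to the subdivision vertex of the edge joining its two
   white neighbours; [w0] is a junk value for blue vertices whose white
   neighbours do not form an edge, which [B_deg2] rules out. *)
Definition to_subdiv (w0 : SD2_vertex e) (v : T) : subdiv_vertex (SD2_rel e) :=
  if insub v is Some a then inl a
  else if insub (SD2_nbhd v) is Some s then inr s else inl w0.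

Section ToSubdiv.
Variable w0 : SD2_vertex e.
Local Notation f := (to_subdiv w0).

Lemma to_subdiv_W v (vW : v \in W) : f v = inl (SD2_of vW).
Proof. by rewrite /to_subdiv insubT. Qed.

Lemma to_subdiv_B v (vB : v \in B) : f v = inr (Sub (SD2_nbhd v) (is_edge_SD2_nbhd vB)).
Proof. by rewrite /to_subdiv insubF ?inW ?vB // (insubT _ (is_edge_SD2_nbhd vB)). Qed.

Lemma to_subdiv_inj : injective f.
Proof.
move=> x y; have [xB|xB] := boolP (x \in B); have [yB|yB] := boolP (y \in B);
  rewrite -?inW in xB yB; rewrite ?(to_subdiv_B xB) ?(to_subdiv_B yB) ?(to_subdiv_W xB) ?(to_subdiv_W yB) //.
- case=> eq_nbhd; have /cards2P[p [q [pNq nbhd_x]]] : #|nbhd x| == 2 by rewrite B2.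
  have [exp exq] : e x p /\ e x q by rewrite -!in_nbhd nbhd_x !inE !eqxx orbT.
  have [pW qW] := (B_nbr_W xB exp, B_nbr_W xB exq).
  have : SD2_of pW \in SD2_nbhd x /\ SD2_of qW \in SD2_nbhd x by rewrite !inE.
  rewrite eq_nbhd !inE /= => -[eyp eyq].
  exact (common_nbrs_eq e_sym e_irr acyclic pNq exp exq eyp eyq).
- by case.
Qed.

Lemma to_subdiv_surj z : exists v, f v = z.
Proof.
case: z => [a|s]; first by exists (val a); rewrite (to_subdiv_W (valP a)) SD2_ofE.
have /existsP[a /existsP[c /andP[ac /eqP eq_s]]] := valP s.
have [x xB nbhd_x] := SD2_edge_B_deg2 ac.
exists x; rewrite (to_subdiv_B xB); congr inr; apply: val_inj => /=.
by rewrite eq_s; apply/setP => d; rewrite !inE -!val_eqE -in_set2 -nbhd_x in_nbhd.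
Qed.

Lemma to_subdiv_edge x y : subdiv_rel (SD2_rel e) (f x) (f y) = e x y.
Proof.
have [xB|xB] := boolP (x \in B); have [yB|yB] := boolP (y \in B);
  rewrite -?inW in xB yB; rewrite ?(to_subdiv_B xB) ?(to_subdiv_B yB) ?(to_subdiv_W xB) ?(to_subdiv_W yB) /=.
- by apply/esym/negP => /B_indep; apply.
- by rewrite inE.
- by rewrite inE e_sym.
- by apply/esym/negbTE/W_indep.
Qed.

End ToSubdiv.

Lemma B_deg2_subdiv_SD2 : is_subdivision_of e (SD2_rel e).
Proof.
have [w wW] := W_nonempty; pose w0 := SD2_of wW.
have f_inj : injective (to_subdiv w0) := to_subdiv_inj (w0 := w0).
exists (to_subdiv w0); split; last exact: to_subdiv_edge.
apply: (inj_card_bij f_inj); rewrite -(card_codom f_inj).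
by apply/subset_leq_card/subsetP => z _; have [v <-] := to_subdiv_surj w0 z; apply: codom_f.
Qed.

Lemma B_deg2_Zminus1 : Zminus e = 1.
Proof.
have [w wW] := W_nonempty.
suff forcing_w : skew_forcing_set e [set w].
  apply/eqP; rewrite eqn_leq -{1}(cards1 w) Zminus_le //=.
  have [S forcingS ->] := Zminus_attained e; rewrite card_gt0; apply: contraTneq forcingS => ->.
  by apply/negP => /eqP B_full; move: wW; rewrite inW /Bempty B_full inE.
set C := skew_closure e [set w]; rewrite /skew_forcing_set eqEsubset subsetT /=.
have BC : B \subset C := skew_closureS e (sub0set [set w]).
have wC : w \in C := subsetP (sub_skew_closure e [set w]) w (set11 w).
apply/subsetP => y _; apply/negPn/negP => yNC.
have yW : y \in W by rewrite inW; apply: contra yNC; apply: (subsetP BC).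
have [a [c [ac aC cNC]]] := crossing (C := fun a : SD2_vertex e => val a \in C)
  (SD2_connected (SD2_of wW) (SD2_of yW)) wC yNC; rewrite /= in aC cNC.
have [x xB nbhd_x] := SD2_edge_B_deg2 ac.
have : white_nbrs e C x == [set val c].
  apply/eqP/setP => z; rewrite in_white_nbrs -(in_nbhd e) nbhd_x !inE.
  have [->|zNc] := eqVneq z (val c); first by rewrite orbT cNC.
  by rewrite orbF; case: eqP => // ->; rewrite aC.
by move/skew_step_forced; rewrite /C skew_closureK; apply/negP.
Qed.
End BDeg2.

Lemma not_W_deg2 : ~ (forall w, w \in W -> #|nbhd w| = 2).
Proof.
move=> W2; move: sum_deg_W card_BW sum_deg_B; rewrite (eq_bigr (fun _ => 2)) // sum_nat_const.
have : \sum_(b in B) 2 <= \sum_(b in B) #|nbhd b| by apply: leq_sum => b /B_deg_gt1.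
by rewrite sum_nat_const; lia.
Qed.

(* The vertices of a 1-subdivision that come from edges form one side of the
   unique bipartition of the tree; they cannot be the white side. *)
Lemma subdiv_B_deg2 (U : finType) (g : rel U) : irreflexive g -> is_subdivision_of e g -> B_deg2.
Proof.
move=> g_irr [f [[f' fK f'K] f_edge]].
have deg2 z : ~~ is_inl (f z) -> #|nbhd z| = 2.
  by case fz: (f z) => [//|s] _; apply: (subdiv_iso_deg2 f_edge g_irr fK f'K fz).
have parity := bipartition_parity bipartite_B (subdiv_iso_bipartite f_edge).
have [x0 _] : exists x0, x0 \in [set: T] by apply/card_gt0P; rewrite cardsT.
have [x0_same|x0_diff] := boolP ((x0 \in B) == is_inl (f x0)).
  case: not_W_deg2 => w; rewrite inW => wNB; apply: deg2.
  by move: (parity x0 w (conn x0 w)); rewrite x0_same (negbTE wNB); case: (is_inl (f w)).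
move=> b bB; apply: deg2.
by move: (parity x0 b (conn x0 b)); rewrite (negbTE x0_diff) bB; case: (is_inl (f b)).
Qed.

Lemma skew_nontrivial_tree_tfae :
  [<-> Zminus e = 1;
       is_tree (SD2_rel e);
       exists (U : finType) (f : rel U),
         [/\ simple_graph f, is_tree f & is_subdivision_of e f];
       is_subdivision_of e (SD2_rel e)].
Proof.
tfae.
- by move/Zminus1_B_deg2/B_deg2_SD2_tree.
- move/SD2_tree_B_deg2 => B2; exists (SD2_vertex e), (SD2_rel e).
  by split; [split; [apply: SD2_sym | apply: SD2_irr] | apply: B_deg2_SD2_tree | apply: B_deg2_subdiv_SD2].
- by case=> U [g [[_ g_irr] _ /(subdiv_B_deg2 g_irr)/B_deg2_subdiv_SD2]].
- by move/(subdiv_B_deg2 (@SD2_irr _ e))/B_deg2_Zminus1.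
Qed.
End SkewNontrivialTree.

Theorem theorem6p9 (T : finType) (e : rel T) :
  simple_graph e -> is_tree e -> skew_nontrivial e ->
  [<-> Zminus e = 1;
       is_tree (SD2_rel e);
       exists (U : finType) (f : rel U),
         [/\ simple_graph f, is_tree f & is_subdivision_of e f];
       is_subdivision_of e (SD2_rel e)].
Proof.
move=> [e_sym e_irr] [T_gt0 conn e_acyclic] [B_white_nbr B_indep].
have acyclic : ~ has_cycle e by case=> c [uniq_c size_c]; apply/negP/e_acyclic.
exact: skew_nontrivial_tree_tfae e_sym e_irr acyclic conn T_gt0 B_white_nbr B_indep.
Qed.
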